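(* Let $n\ge3$ and $2\le f\le n-1$. The $f$-fault tolerant gathering problem to $f$ points ($f$FGP) is unsolvable under the SSYNC scheduler by any algorithm (of any size $\le n$); i.e., its MAS is $\infty$.
   Context: Model. A swarm consists of $n\ge1$ robots $r_1,\dots,r_n$, modeled as points in $\mathbb R^2$. Each robot $r_i$ has a local right-handed $x$-$y$ coordinate system $Z_i$ whose origin is always the robot's current position, with arbitrary (adversarially chosen, fixed) unit length and axis orientation; robots do not share coordinate systems. The configuration at time $t$ is the multiset $P_t$ of the $n$ robot positions (robots can detect multiplicities). A target function $\phi$ maps each finite multiset $P$ of points of $\mathbb R^2$ with $(0,0)\in P$ to a point $\phi(P)\in\mathbb R^2$. Time is discrete, $t=0,1,2,\dots$. Under the semi-synchronous (SSYNC) scheduler, at each time $t$ an adversary chooses a set of robots to activate; each activated robot $r_i$ observes $P_t$ expressed in $Z_i$, evaluates its target function on this multiset, and moves to the resulting point (interpreted in $Z_i$), arriving before time $t+1$; non-activated robots do not move. Schedules are fair: every robot is activated infinitely often. An algorithm of size $m$ is a set $\Phi$ of $m$ distinct target functions ($m\le n$); an assignment is a surjection $\mathcal A$ from the robots onto $\Phi$, robot $r_i$ using $\mathcal A(r_i)$. $\Phi$ solves a problem if for every assignment, every choice of local coordinate systems, every initial configuration and every fair SSYNC schedule, the resulting execution solves the problem. The MAS of a problem is the least $m$ such that some algorithm of size $m$ solves it, and $\infty$ if no algorithm of any size $m\le n$ solves it. For a multiset $P$, $\overline P$ is its set of distinct points. Crash faults. The adversary may choose up to $f$ robots to be faulty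 and, for each, a time from which it crashes: from then on it never moves again (even when activated); before that it behaves correctly. ''Solves under at most $f$ crashes'' quantifies additionally over all such crash patterns. Problem. $f$FGP: starting from any initial configuration, with at most $f$ crashed robots, reach a configuration $P$ in which all $n$ robots (faulty ones included) occupy at most $f$ distinct points, i.e., $|\overline P|\le f$. *)

From HB Require Import structures.
From mathcomp Require Import all_boot all_order all_algebra.
From mathcomp Require Import reals.
Set Implicit Arguments. Unset Strict Implicit. Unset Printing Implicit Defensive.
Import Order.TTheory GRing.Theory Num.Theory.
Local Open Scope ring_scope.

Section Robots.
Variable R : realType.

Definition pt := (R * R)%type.
Definition origin : pt := (0, 0).

(* A target function maps finite multisets of points (represented by lists,
   the function being required to be invariant under permutation) to points.
   Only its values on multisets containing the origin are relevant. *)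
Definition multiset_fun (phi : seq pt -> pt) : Prop :=
  forall s1 s2 : seq pt, perm_eq s1 s2 -> phi s1 = phi s2.

Definition same_target (phi psi : seq pt -> pt) : Prop :=
  forall P : seq pt, origin \in P -> phi P = psi P.

Definition algorithm (m : nat) (Phi : 'I_m -> seq pt -> pt) : Prop :=
  (forall k, multiset_fun (Phi k)) /\
  (forall k l, same_target (Phi k) (Phi l) -> k = l).

(* Local coordinate system of a robot: positive unit length [u] and an
   orientation given by a rotation (cos, sin) = (c, s), c^2 + s^2 = 1
   (right-handed: a rotation, no reflection).  Its origin is the robot's
   current position. *)
Record frame := Frame { fr_u : R; fr_c : R; fr_s : R }.
Definition valid_frame (F : frame) : Prop :=
  0 < fr_u F /\ fr_c F ^+ 2 + fr_s F ^+ 2 = 1.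

Definition to_local (F : frame) (p q : pt) : pt :=
  let dx := q.1 - p.1 in let dy := q.2 - p.2 in
  ((fr_c F * dx + fr_s F * dy) / fr_u F,
   (- fr_s F * dx + fr_c F * dy) / fr_u F).

Definition to_global (F : frame) (p v : pt) : pt :=
  (p.1 + fr_u F * (fr_c F * v.1 - fr_s F * v.2),
   p.2 + fr_u F * (fr_s F * v.1 + fr_c F * v.2)).

Definition crashed n (crash : 'I_n -> option nat) (i : 'I_n) (t : nat) : bool :=
  if crash i is Some t0 then (t0 <= t)%N else false.

Fixpoint exec n m (Phi : 'I_m -> seq pt -> pt) (asg : 'I_n -> 'I_m)
    (Z : 'I_n -> frame) (init : 'I_n -> pt) (act : nat -> 'I_n -> bool)
    (crash : 'I_n -> option nat) (t : nat) : 'I_n -> pt :=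
  match t with
  | 0 => init
  | t'.+1 =>
      let P := exec Phi asg Z init act crash t' in
      fun i =>
        if act t' i && ~~ crashed crash i t' then
          let view := [seq to_local (Z i) (P i) (P j) | j <- enum 'I_n] in
          to_global (Z i) (P i) (Phi (asg i) view)
        else P i
  end.

Definition n_distinct n (P : 'I_n -> pt) : nat :=
  size (undup [seq P i | i <- enum 'I_n]).

Definition solves_fFGP (n f m : nat) (Phi : 'I_m -> seq pt -> pt) : Prop :=
  forall (asg : 'I_n -> 'I_m), (forall k, exists i, asg i = k) ->
  forall (Z : 'I_n -> frame), (forall i, valid_frame (Z i)) ->
  forall (init : 'I_n -> pt),
  forall (act : nat -> 'I_n -> bool),
    (forall i t, exists t', (t <= t')%N /\ act t' i) ->
  forall (crash : 'I_n -> option nat),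
    (#|[pred i | crash i != None]| <= f)%N ->
  exists t, (n_distinct (exec Phi asg Z init act crash t) <= f)%N.

End Robots.

From HB Require Import structures.
From mathcomp Require Import all_boot all_order all_algebra.
From mathcomp Require Import reals zify.
From Stdlib Require Import Classical ClassicalEpsilon FunctionalExtensionality.
Set Implicit Arguments. Unset Strict Implicit. Unset Printing Implicit Defensive.
Import Order.TTheory GRing.Theory Num.Theory.

(* The adversary keeps f + 1 "core" robots at pairwise distinct positions
   forever, so at least f + 1 points are always occupied.  At each round it
   activates every non-core robot and a nonempty set A of core robots whose
   moves keep the core positions distinct.  Such an A exists: either some core
   robot's destination is not occupied by another core robot, and A is that
   robot alone; or every destination is the position of a core robot, which
   defines a map g on the core, and A is a cycle of g, whose robots permute
   their positions.  Core robots that are eventually never activated are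
   declared crashed; since some core robot is activated in every round, at
   least one of them is correct, so at most f robots crash. *)

Lemma exists_periodic_iter (T : finType) (g : T -> T) x :
  exists2 y, fconnect g x y & exists2 L, (0 < L)%N & iter L g y = y.
Proof.
have /trajectP[i lt_i_ord loop] := looping_order g x.
exists (iter i g x); first exact: fconnect_iter.
exists (order g x - i)%N; first by rewrite subn_gt0.
by rewrite -iterD subnK 1?ltnW.
Qed.

Section ActiveSet.
Variables (T : finType) (X : eqType) (C : {pred T}) (p d : T -> X).
Hypothesis p_inj : {in C &, injective p}.

Definition advance (A : {set T}) (i : T) : X := if i \in A then d i else p i.

Lemma advance_single x :
  {in C, forall y, y != x -> d x != p y} -> {in C &, injective (advance [set x])}.
Proof.
move=> dx i j iC jC; rewrite /advance !inE.
have [-> | nix] := eqVneq i x; have [-> | njx] := eqVneq j x => // e.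
- by move: (dx j jC njx); rewrite e eqxx.
- by move: (dx i iC nix); rewrite -e eqxx.
- exact: p_inj.
Qed.

Section Cycle.
Variable g : T -> T.
Hypotheses (g_C : {in C, forall x, g x \in C}) (d_g : {in C, forall x, d x = p (g x)}).

Lemma fconnect_in x y : x \in C -> fconnect g x y -> y \in C.
Proof.
move=> xC /iter_findex <-; elim: (findex g x y) => [|k IHk] //=.
exact: g_C.
Qed.

Variables (y : T) (L : nat).
Hypotheses (L_gt0 : (0 < L)%N) (y_periodic : iter L g y = y).

Lemma fconnect_periodic z : fconnect g y z -> iter L g z = z.
Proof. by move=> /iter_findex <-; rewrite -iterD addnC iterD y_periodic. Qed.

Lemma advance_cycle : {in C &, injective (advance [set z | fconnect g y z])}.
Proof.
have g_cycle z : fconnect g y z -> fconnect g y (g z).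
  by move=> yz; apply: connect_trans yz (fconnect1 g z).
have back z : fconnect g y z -> iter L.-1 g (g z) = z.
  by move=> yz; rewrite -iterSr prednK // fconnect_periodic.
move=> i j iC jC; rewrite /advance !inE d_g // d_g //.
case: (boolP (fconnect g y i)) => yi; case: (boolP (fconnect g y j)) => yj e.
- by rewrite -(back i yi) -(back j yj) (p_inj (g_C iC) (g_C jC) e).
- by move: (g_cycle i yi); rewrite (p_inj (g_C iC) jC e) (negbTE yj).
- by move: (g_cycle j yj); rewrite -(p_inj iC (g_C jC) e) (negbTE yi).
- exact: p_inj.
Qed.

End Cycle.

Lemma exists_active_set : (exists x, x \in C) ->
  exists A : {set T}, [/\ A \subset C, A != set0 & {in C &, injective (advance A)}].
Proof.
move=> [x0 x0C].
case: (boolP [exists x in C, [forall y in C, (y != x) ==> (d x != p y)]]).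
  case/exists_inP=> x xC /forall_inP dx; exists [set x].
  split; last by apply: advance_single => y yC; apply/implyP/dx.
    by apply/subsetP=> y; rewrite inE => /eqP ->.
  by apply/set0Pn; exists x; rewrite inE.
rewrite negb_exists_in => /forall_inP no_single.
have hit x : x \in C -> exists2 y, y \in C & d x == p y.
  move=> xC; move: (no_single x xC); rewrite negb_forall_in => /exists_inP[y yC].
  by rewrite negb_imply negbK => /andP[_ e]; exists y.
pose g x := odflt x [pick y in C | d x == p y].
have gP x : x \in C -> g x \in C /\ d x = p (g x).
  move=> xC; rewrite /g; case: pickP => [y /andP[yC /eqP e] | none] //.
  by have [y yC e] := hit x xC; move: (none y); rewrite yC e.
have g_C : {in C, forall x, g x \in C} by move=> x /gP[].
have d_g : {in C, forall x, d x = p (g x)} by move=> x /gP[].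
have [y x0y [L L_gt0 yL]] := exists_periodic_iter g x0.
exists [set z | fconnect g y z]; split.
- have yC := fconnect_in g_C x0C x0y.
  by apply/subsetP=> z; rewrite in_set; exact: (fconnect_in g_C yC).
- by apply/set0Pn; exists y; rewrite inE connect0.
- exact: (advance_cycle g_C d_g L_gt0 yL).
Qed.

End ActiveSet.

Lemma card_le_n_distinct (R : realType) n (P : 'I_n -> pt R) (C : {set 'I_n}) :
  {in C &, injective P} -> (#|C| <= n_distinct P)%N.
Proof.
move=> P_inj; rewrite /n_distinct cardE -(size_map P).
apply: uniq_leq_size => [|x /mapP[i _ ->]].
  by rewrite map_inj_in_uniq ?enum_uniq // => i j; rewrite !mem_enum; apply: P_inj.
by rewrite mem_undup map_f ?mem_enum.
Qed.

Section Adversary.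
Variables (R : realType) (n f m : nat) (Phi : 'I_m -> seq (pt R) -> pt R).
Variables (asg : 'I_n -> 'I_m) (Z : 'I_n -> frame R) (init : 'I_n -> pt R).
Variable core : {set 'I_n}.
Hypotheses (card_core : #|core| = f.+1) (init_inj : {in core &, injective init}).

Definition dest (P : 'I_n -> pt R) (i : 'I_n) : pt R :=
  to_global (Z i) (P i) (Phi (asg i) [seq to_local (Z i) (P i) (P j) | j <- enum 'I_n]).

Definition safe_set P (A : {set 'I_n}) : Prop :=
  [/\ A \subset core, A != set0 & {in core &, injective (advance P (dest P) A)}].

Definition active_set P : {set 'I_n} := epsilon (inhabits set0) (safe_set P).

Lemma active_setP P : {in core &, injective P} -> safe_set P (active_set P).
Proof.
move=> P_inj; apply: epsilon_spec; apply: exists_active_set P_inj _.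
by apply/set0Pn; rewrite -card_gt0 card_core.
Qed.

Definition step P i := if (i \notin core) || (i \in active_set P) then dest P i else P i.

Fixpoint traj t := if t is t'.+1 then step (traj t') else init.

Lemma traj_inj t : {in core &, injective (traj t)}.
Proof.
elim: t => [|t IH] //= i j iC jC.
have [_ _ adv_inj] := active_setP IH.
by rewrite /step iC jC; apply: adv_inj.
Qed.

Definition idle_from i t0 := forall t, (t0 <= t)%N -> i \notin active_set (traj t).

Definition crash i : option nat :=
  if excluded_middle_informative (i \in core /\ exists t0, idle_from i t0) is left _
  then Some (epsilon (inhabits 0%N) (idle_from i)) else None.

Lemma crash_some i t0 : crash i = Some t0 -> i \in core /\ idle_from i t0.
Proof.
rewrite /crash; case: excluded_middle_informative => // -[iC idle] [<-].
by split=> //; apply: epsilon_spec.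
Qed.

Lemma crash_none i : crash i = None -> i \in core -> ~ exists t0, idle_from i t0.
Proof.
by rewrite /crash; case: excluded_middle_informative => // no _ iC idle; apply: no.
Qed.

(* Crashed robots are activated too: it costs nothing and makes the schedule fair. *)
Definition act t i := (i \notin core) || (i \in active_set (traj t)) || crashed crash i t.

Lemma exec_traj t : exec Phi asg Z init act crash t = traj t.
Proof.
elim: t => [|t IH] //=; rewrite IH; apply: functional_extensionality => i.
rewrite /step /act; case: (boolP (crashed crash i t)) => [|_]; last by rewrite orbF andbT.
rewrite /crashed; case E: (crash i) => [t0|] // t0_le.
have [iC idle] := crash_some E.
by rewrite iC (negbTE (idle _ t0_le)) andbF.
Qed.

Lemma act_fair i t : exists t', (t <= t')%N /\ act t' i.
Proof.
have [iC|iNC] := boolP (i \in core); last by exists t; rewrite /act iNC.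
case E: (crash i) => [t0|].
  by exists (maxn t t0); rewrite leq_maxl /act /crashed E leq_maxr !orbT.
apply: NNPP => never; apply: (crash_none E iC); exists t => t' le_t_t'.
by apply/negP => act_t'; apply: never; exists t'; rewrite /act act_t' orbT.
Qed.

Lemma exists_correct_core : exists2 i, i \in core & crash i = None.
Proof.
apply: NNPP => all_crash.
pose horizon := (\max_i odflt 0 (crash i))%N.
have [sub_core /set0Pn[i iA] _] := active_setP (@traj_inj horizon).
case E: (crash i) => [t0|].
  2: by apply: all_crash; exists i; rewrite ?(subsetP sub_core).
have [_ idle] := crash_some E.
have le_t0_horizon : (t0 <= horizon)%N.
  by move: (@leq_bigmax _ (fun j => odflt 0 (crash j)) i); rewrite E.
by move: (idle horizon le_t0_horizon); rewrite iA.
Qed.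

Lemma crash_bound : (#|[pred i | crash i != None]| <= f)%N.
Proof.
have [i0 i0C i0_correct] := exists_correct_core.
have -> : f = #|core :\ i0| by apply: succn_inj; rewrite -card_core (cardsD1 i0) i0C.
apply: subset_leq_card; apply/subsetP => i; rewrite !inE.
case E: (crash i) => [t0|] // _; have [iC _] := crash_some E.
by rewrite iC andbT; apply/eqP => i_i0; move: E; rewrite i_i0 i0_correct.
Qed.

Lemma adversary_wins : (forall k, exists i, asg i = k) ->
  (forall i, valid_frame (Z i)) -> ~ solves_fFGP n f Phi.
Proof.
move=> asg_onto Z_valid solves.
have [t] := solves asg asg_onto Z Z_valid init act act_fair crash crash_bound.
by rewrite exec_traj leqNgt -card_core (card_le_n_distinct (@traj_inj t)).
Qed.

End Adversary.

Theorem theoremT4070 (R : realType) (n f : nat) :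
  (3 <= n)%N -> (2 <= f)%N -> (f <= n - 1)%N ->
  forall (m : nat) (Phi : 'I_m -> seq (pt R) -> pt R),
    (1 <= m <= n)%N -> algorithm Phi -> ~ solves_fFGP n f Phi.
Proof.
move=> n_ge3 _ f_le m Phi /andP[m_gt0 m_le_n] _ solves.
have f_lt_n : (f < n)%N by lia.
pose asg (i : 'I_n) : 'I_m := insubd (Ordinal m_gt0) (val i).
have asg_onto k : exists i, asg i = k.
  exists (widen_ord m_le_n k); apply: val_inj.
  by rewrite /asg /= insubdK //; apply: ltn_ord.
pose Z (i : 'I_n) : frame R := Frame 1%R 1%R 0%R.
have Z_valid i : valid_frame (Z i) by rewrite /valid_frame /= expr1n expr0n addr0.
pose init (i : 'I_n) : pt R := ((val i)%:R, 0)%R.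
have init_inj : injective init by move=> i j [/eqP]; rewrite eqr_nat => /eqP/val_inj.
pose core := [set widen_ord f_lt_n k | k : 'I_f.+1].
have card_core : #|core| = f.+1.
  by rewrite card_imset ?card_ord // => k l [/val_inj].
have core_inj : {in core &, injective init} by move=> i j _ _ /init_inj.
exact: adversary_wins card_core core_inj asg_onto Z_valid solves.
Qed.
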